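(* For all non-negative integers $k,t$ with $t<k$ and all $j_1,j_2\in\{1,2\}$, we have $B_t(G_k,v_{(k,j_1)})\cap B_t(G_k,v_{(0,j_2)})=\emptyset$.
   Context: The planar graphs $G_k$ are defined inductively. $G_0$ has vertex set $\{v_{(0,1)},v_{(0,2)}\}$ and the single edge $\{v_{(0,1)},v_{(0,2)}\}$. For $i\ge 1$, $G_i$ is obtained from $G_{i-1}$ by adding, for each $j\in\{1,2\}$, four new vertices $a_{(i,j)},b_{(i,j)},c_{(i,j)},v_{(i,j)}$ and the edges $\{a_{(i,j)},b_{(i,j)}\},\{b_{(i,j)},c_{(i,j)}\},\{c_{(i,j)},a_{(i,j)}\}$, $\{a_{(i,j)},v_{(i,j)}\},\{b_{(i,j)},v_{(i,j)}\},\{c_{(i,j)},v_{(i,j)}\}$, $\{a_{(i,j)},v_{(i-1,j)}\},\{b_{(i,j)},v_{(i-1,j)}\},\{c_{(i,j)},v_{(i-1,j)}\}$. For a graph $G$, a vertex $v$ and a non-negative integer $t$, $B_t(G,v)$ is the set of vertices of $G$ at shortest-path distance at most $t$ from $v$. *)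

From Stdlib Require Import Arith Lia.

(* Vertices of the graphs G_k.  [Vv i j] is v_(i,j), [Va i j] is a_(i,j),
   [Vb i j] is b_(i,j), [Vc i j] is c_(i,j); j is meant to be 1 or 2. *)
Inductive vtx : Type :=
| Vv (i j : nat) | Va (i j : nat) | Vb (i j : nat) | Vc (i j : nat).

Definition in_G (k : nat) (x : vtx) : Prop :=
  match x with
  | Vv i j => i <= k /\ (j = 1 \/ j = 2)
  | Va i j | Vb i j | Vc i j => 1 <= i <= k /\ (j = 1 \/ j = 2)
  end.

Definition base_edge (k : nat) (x y : vtx) : Prop :=
  (x = Vv 0 1 /\ y = Vv 0 2) \/
  exists i j, 1 <= i <= k /\ (j = 1 \/ j = 2) /\
    ((x = Va i j /\ y = Vb i j) \/ (x = Vb i j /\ y = Vc i j) \/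
     (x = Vc i j /\ y = Va i j) \/
     (x = Va i j /\ y = Vv i j) \/ (x = Vb i j /\ y = Vv i j) \/
     (x = Vc i j /\ y = Vv i j) \/
     (x = Va i j /\ y = Vv (i - 1) j) \/ (x = Vb i j /\ y = Vv (i - 1) j) \/
     (x = Vc i j /\ y = Vv (i - 1) j)).

Definition adj (k : nat) (x y : vtx) : Prop := base_edge k x y \/ base_edge k y x.

(* [within k n x y]: in G_k there is a walk from x to y with at most n edges,
   i.e. the shortest-path distance from x to y in G_k is at most n. *)
Inductive within (k : nat) : nat -> vtx -> vtx -> Prop :=
| within_refl n x : in_G k x -> within k n x x
| within_step n x y z : adj k x y -> within k n y z -> within k (S n) x z.

Definition ball (k t : nat) (v : vtx) : vtx -> Prop := fun x => within k t v x.

(* Give v_(i,j) level 2i and a_(i,j), b_(i,j), c_(i,j) level 2i - 1.  Every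
   edge of G_k joins vertices whose levels differ by at most one, so a walk of
   length n changes the level by at most n.  Since v_(k,j1) and v_(0,j2) have
   levels 2k and 0, a common point of the two balls would give 2k <= 2t. *)
From Stdlib Require Import Arith Lia.

Definition level (x : vtx) : nat :=
  match x with
  | Vv i _ => 2 * i
  | Va i _ | Vb i _ | Vc i _ => 2 * i - 1
  end.

Lemma base_edge_level k x y :
  base_edge k x y -> level y <= level x + 1 /\ level x <= level y + 1.
Proof.
  intros [[-> ->] | [i [j [Hi [_ H]]]]]; simpl; [lia|].
  repeat destruct H as [[-> ->] | H]; simpl; try lia.
  destruct H as [-> ->]; simpl; lia.
Qed.

Lemma adj_level k x y :
  adj k x y -> level y <= level x + 1 /\ level x <= level y + 1.
Proof.
  intros [H | H]; apply base_edge_level in H; lia.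
Qed.

Lemma within_level k n x y :
  within k n x y -> level y <= level x + n /\ level x <= level y + n.
Proof.
  induction 1 as [n x _ | n x y z Hxy _ IH]; [lia|].
  apply adj_level in Hxy; lia.
Qed.

Theorem lemma6p4 (k t j1 j2 : nat) :
  t < k -> (j1 = 1 \/ j1 = 2) -> (j2 = 1 \/ j2 = 2) ->
  forall x : vtx, ~ (ball k t (Vv k j1) x /\ ball k t (Vv 0 j2) x).
Proof.
  intros Htk _ _ x [Hk H0].
  apply within_level in Hk; apply within_level in H0.
  simpl in Hk, H0; lia.
Qed.
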